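(* Let $m\ge n\ge3$ be integers. If $Q\in\mathfrak{C}^0_{(m)}$, then $Q\in\mathfrak{C}^0_{(n)}$. If $Q\in\mathfrak{C}^{0,\alpha}_{(m)}$, then $Q\in\mathfrak{C}^{0,\alpha}_{(n)}$.
   Context: Fix $\mathsf{a}>0$, $\Xi_0>0$, $R_0=\mathsf{a}\Xi_0$, and $\alpha\in(0,1)$. For integer $n\ge3$ and $\Xi>0$, $B^{(n)}(\Xi)$ is the open ball of radius $\Xi$ in $\mathbb{R}^n$. For $f$ on $\bar B^{(n)}(\Xi)$: $\|f;C^0\|=\sup|f|$ and $\|f;C^{0,\alpha}\|=\sup|f|+\sup\{|f(\xi')-f(\xi)|/|\xi'-\xi|^\alpha:\ \xi,\xi'\in\bar B^{(n)}(\Xi),\ 0<|\xi'-\xi|\le1\}$. For a function $Q$ of $(\varpi,z)$, $\varpi\ge0$, set $Q^{\flat(n)}(\xi)=Q(\mathsf{a}\sqrt{\xi_1^2+\dots+\xi_{n-1}^2},\mathsf{a}\xi_n)$, and $r=\sqrt{\varpi^2+z^2}$. Kelvin transform: $\xi^\star=(\Xi_0/|\xi|)^2\xi$, $f_{\star(n)}(\xi^\star)=(|\xi|/\Xi_0)^{n-2}f(\xi)$. $\mathfrak{C}^{0}(\bar{\mathfrak{D}}(R))$ (resp. $\mathfrak{C}^{0,\alpha}(\bar{\mathfrak{D}}(R))$): continuous $Q$ on $\{r\le R\}$, even in $z$, with $Q^{\flat(n)}\in C^0(\bar B^{(n)}(R/\mathsf{a}))$ (resp. $C^{0,\alpha}$),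 norm that of $Q^{\flat(n)}$ (independent of $n$). $\mathfrak{C}^0_{(n)}(\overline{\mathfrak{D}^{c}}(R_0))$ (resp. $\mathfrak{C}^{0,\alpha}_{(n)}(\overline{\mathfrak{D}^{c}}(R_0))$): $Q$ on $\{r\ge R_0\}$, even in $z$, such that $(Q^{\flat(n)})_{\star(n)}$ on $\bar B^{(n)}(\Xi_0)\setminus\{0\}$ is the restriction of some $F\in C^0(\bar B^{(n)}(\Xi_0))$ (resp. $C^{0,\alpha}$); norm that of $F$. Cut-off $\chi\in C^\infty(\mathbb{R})$ with $\chi(t)=1$ for $t\le1$, $0<\chi<1$ on $(1,2)$, $\chi(t)=0$ for $t\ge2$; $Q^{[0]}=\chi(r/R_0)Q$, $Q^{[\infty]}=(1-\chi(r/R_0))Q$. $\mathfrak{C}^0_{(n)}$ (resp. $\mathfrak{C}^{0,\alpha}_{(n)}$): $Q$ even in $z$ with $Q^{[0]}\in\mathfrak{C}^0(\bar{\mathfrak{D}}(2R_0))$ and $Q^{[\infty]}\in\mathfrak{C}^0_{(n)}(\overline{\mathfrak{D}^c}(R_0))$ (resp. with $0,\alpha$), norm the maximum of the two norms. *)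

From HB Require Import structures.
From mathcomp Require Import all_boot all_order all_algebra.
From mathcomp Require Import all_classical all_reals all_analysis.
Unset Printing Implicit Defensive.
Import Order.TTheory GRing.Theory Num.Theory.
Import numFieldNormedType.Exports.
Local Open Scope ring_scope.

Section Spaces.
Variable R : realType.

Definition enorm (n : nat) (xi : 'I_n -> R) : R := Num.sqrt (\sum_(i < n) xi i ^+ 2).
Definition edist (n : nat) (xi eta : 'I_n -> R) : R := enorm n (fun i => xi i - eta i).
(* k-th coordinate (0-based), 0 if k >= n *)
Definition coord (n : nat) (xi : 'I_n -> R) (k : nat) : R :=
  if @insub nat (fun k => k < n)%N 'I_n k is Some i then xi i else 0.

Definition inball (n : nat) (Xi : R) (xi : 'I_n -> R) : Prop := enorm n xi <= Xi.

Definition C0ball (n : nat) (Xi : R) (f : ('I_n -> R) -> R) : Prop :=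
  (forall xi, inball n Xi xi -> forall e, 0 < e -> exists2 d, 0 < d &
     forall eta, inball n Xi eta -> edist n eta xi < d -> `|f eta - f xi| < e) /\
  (exists M, forall xi, inball n Xi xi -> `|f xi| <= M).

Definition C0aball (alpha : R) (n : nat) (Xi : R) (f : ('I_n -> R) -> R) : Prop :=
  C0ball n Xi f /\
  (exists C, forall xi xi', inball n Xi xi -> inball n Xi xi' ->
     0 < edist n xi' xi <= 1 -> `|f xi' - f xi| <= C * (edist n xi' xi `^ alpha)).

Definition rr (w z : R) : R := Num.sqrt (w ^+ 2 + z ^+ 2).

Definition flat (a : R) (n : nat) (Q : R -> R -> R) (xi : 'I_n -> R) : R :=
  Q (a * Num.sqrt (\sum_(k < n.-1) coord n xi k ^+ 2)) (a * coord n xi n.-1).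

Definition kpt (Xi0 : R) (n : nat) (xi : 'I_n -> R) : 'I_n -> R :=
  fun i => (Xi0 / enorm n xi) ^+ 2 * xi i.

Definition regularity := forall n : nat, R -> (('I_n -> R) -> R) -> Prop.

Definition Cint (reg : regularity) (a : R) (n : nat) (Rr : R) (Q : R -> R -> R) : Prop :=
  (forall w z, 0 <= w -> rr w z <= Rr -> Q w (- z) = Q w z) /\
  (forall w z, 0 <= w -> rr w z <= Rr -> forall e, 0 < e -> exists2 d, 0 < d &
     forall w' z', 0 <= w' -> rr w' z' <= Rr -> rr (w' - w) (z' - z) < d ->
       `|Q w' z' - Q w z| < e) /\
  reg n (Rr / a) (flat a n Q).

(* frak C^{...}_{(n)}(\bar{D^c}(R0)), R0 = a Xi0 *)
Definition Cext (reg : regularity) (a Xi0 : R) (n : nat) (Q : R -> R -> R) : Prop :=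
  (forall w z, 0 <= w -> a * Xi0 <= rr w z -> Q w (- z) = Q w z) /\
  exists F : ('I_n -> R) -> R, reg n Xi0 F /\
    (forall xi, Xi0 <= enorm n xi ->
       F (kpt Xi0 n xi) = (enorm n xi / Xi0) ^+ (n - 2) * flat a n Q xi).

Definition Cfull (reg : regularity) (a Xi0 : R) (chi : R -> R) (n : nat)
    (Q : R -> R -> R) : Prop :=
  (forall w z, 0 <= w -> Q w (- z) = Q w z) /\
  Cint reg a n (2 * (a * Xi0)) (fun w z => chi (rr w z / (a * Xi0)) * Q w z) /\
  Cext reg a Xi0 n (fun w z => (1 - chi (rr w z / (a * Xi0))) * Q w z).

Definition C0 (a Xi0 : R) (chi : R -> R) (n : nat) (Q : R -> R -> R) : Prop :=
  Cfull C0ball a Xi0 chi n Q.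
Definition C0a (alpha a Xi0 : R) (chi : R -> R) (n : nat) (Q : R -> R -> R) : Prop :=
  Cfull (C0aball alpha) a Xi0 chi n Q.

Definition is_cutoff (chi : R -> R) : Prop :=
  (forall k x, derivable (derive1n k chi) x 1) /\
  (forall t, t <= 1 -> chi t = 1) /\
  (forall t, 1 < t < 2 -> 0 < chi t < 1) /\
  (forall t, 2 <= t -> chi t = 0).

End Spaces.

From Pilot Require Import Defs.
From HB Require Import structures.
From mathcomp Require Import all_boot all_order all_algebra.
From mathcomp Require Import all_classical all_reals all_analysis.
From mathcomp Require Import lra ring zify.
Import Order.TTheory GRing.Theory Num.Theory.
Local Open Scope ring_scope.
Set Implicit Arguments.
Unset Strict Implicit.

(* The map [(xi_1, ..., xi_n) |-> (xi_1, ..., xi_(n-1), 0, ..., 0, xi_n)] embeds the ball of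
   [R^n] isometrically into the ball of [R^m]; along it [Q^flat(m)] restricts to [Q^flat(n)],
   and it commutes with the Kelvin inversion.  Restriction along an isometry preserves [C^0]
   and [C^{0,alpha}], which settles the part near the origin.  Near infinity the two Kelvin
   transforms differ by the factor [(|eta| / Xi0)^(m-n)], which is bounded and Lipschitz on
   the closed ball, and multiplying by such a factor also preserves both regularity classes. *)

Section Restriction.
Variable R : realType.

Local Notation coord := (Defs.coord R).
Local Notation enorm := (Defs.enorm R).
Local Notation edist := (Defs.edist R).
Local Notation inball := (Defs.inball R).
Local Notation kpt := (Defs.kpt R).
Local Notation flat := (Defs.flat R).
Local Notation C0ball := (Defs.C0ball R).
Local Notation C0aball := (Defs.C0aball R).
Local Notation Cint := (Defs.Cint R).
Local Notation Cext := (Defs.Cext R).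
Local Notation Cfull := (Defs.Cfull R).

Lemma sqrt_sqrD_triangle (u v a b : R) :
  Num.sqrt ((u + v) ^+ 2 + (a + b) ^+ 2) <=
  Num.sqrt (u ^+ 2 + a ^+ 2) + Num.sqrt (v ^+ 2 + b ^+ 2).
Proof.
have hs := sqr_sqrtr (addr_ge0 (sqr_ge0 u) (sqr_ge0 a)).
have ht := sqr_sqrtr (addr_ge0 (sqr_ge0 v) (sqr_ge0 b)).
have s0 := sqrtr_ge0 (u ^+ 2 + a ^+ 2); have t0 := sqrtr_ge0 (v ^+ 2 + b ^+ 2).
set s := Num.sqrt (u ^+ 2 + a ^+ 2) in hs s0 *.
set t := Num.sqrt (v ^+ 2 + b ^+ 2) in ht t0 *.
rewrite -[s + t]ger0_norm ?addr_ge0 // -sqrtr_sqr ler_sqrt ?sqr_ge0 //.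
(* Cauchy-Schwarz in the plane: [(uv + ab)^2 + (ub - av)^2 = s^2 t^2]. *)
have cs : u * v + a * b <= s * t.
  have := sqr_ge0 (u * b - a * v); have := mulr_ge0 s0 t0; nra.
nra.
Qed.

Lemma sqrt_sum_sqrD_le (k : nat) (f g : 'I_k -> R) :
  Num.sqrt (\sum_(i < k) (f i + g i) ^+ 2) <=
  Num.sqrt (\sum_(i < k) f i ^+ 2) + Num.sqrt (\sum_(i < k) g i ^+ 2).
Proof.
elim: k f g => [|k IH] f g; first by rewrite !big_ord0 sqrtr0 addr0.
rewrite !big_ord_recr /=.
set A := \sum_(i < k) f (widen_ord _ i) ^+ 2.
set B := \sum_(i < k) g (widen_ord _ i) ^+ 2.
have A0 : 0 <= A by apply: sumr_ge0 => i _; apply: sqr_ge0.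
have B0 : 0 <= B by apply: sumr_ge0 => i _; apply: sqr_ge0.
have := sqrt_sqrD_triangle (Num.sqrt A) (Num.sqrt B) (f ord_max) (g ord_max).
rewrite !sqr_sqrtr //; apply: le_trans.
rewrite ler_sqrt ?addr_ge0 ?sqr_ge0 // lerD2r.
rewrite -[X in X <= _]sqr_sqrtr ?sumr_ge0 // => [|i _]; last exact: sqr_ge0.
by rewrite lerXn2r ?nnegrE ?sqrtr_ge0 ?addr_ge0 ?sqrtr_ge0 //; apply: IH.
Qed.

Lemma enorm_ge0 n (x : 'I_n -> R) : 0 <= enorm n x.
Proof. exact: sqrtr_ge0. Qed.

Lemma enormD n (x y : 'I_n -> R) :
  enorm n (fun i => x i + y i) <= enorm n x + enorm n y.
Proof. exact: sqrt_sum_sqrD_le. Qed.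

Lemma enormZ n (x : 'I_n -> R) c : enorm n (fun i => c * x i) = `|c| * enorm n x.
Proof.
rewrite /Defs.enorm -sqrtr_sqr -sqrtrM ?sqr_ge0 // mulr_sumr.
by congr Num.sqrt; apply: eq_bigr => i _; rewrite exprMn.
Qed.

Lemma edistC n (x y : 'I_n -> R) : edist n x y = edist n y x.
Proof.
by congr Num.sqrt; apply: eq_bigr => i _; rewrite -opprB sqrrN.
Qed.

Lemma edist_ge0 n (x y : 'I_n -> R) : 0 <= edist n x y.
Proof. exact: sqrtr_ge0. Qed.

Lemma enorm_le_edistD n (x y : 'I_n -> R) : enorm n x <= enorm n y + edist n x y.
Proof.
have := enormD y (fun i => x i - y i).
by have -> : (fun i => y i + (x i - y i)) = x by apply: funext => i; rewrite addrC subrK.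
Qed.

Lemma enorm_dist_le n (x y : 'I_n -> R) : `|enorm n x - enorm n y| <= edist n x y.
Proof.
have := enorm_le_edistD x y; have := enorm_le_edistD y x.
rewrite edistC ler_norml; lra.
Qed.

Lemma normr_subXX_le (u v : R) k : 0 <= u <= 1 -> 0 <= v <= 1 ->
  `|u ^+ k - v ^+ k| <= k%:R * `|u - v|.
Proof.
move=> /andP[u0 u1] /andP[v0 v1].
rewrite subrXX normrM mulrC ler_wpM2r //.
apply: le_trans (ler_norm_sum _ _ _) _.
rewrite -[k in k%:R]card_ord -sumr_const ler_sum // => i _.
rewrite normrM !ger0_norm ?exprn_ge0 //.
by rewrite mulr_ile1 ?exprn_ge0 ?exprn_ile1.
Qed.

Lemma inball_div_unit (X : R) n (x : 'I_n -> R) : 0 < X -> inball n X x ->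
  0 <= enorm n x / X <= 1.
Proof.
move=> X0 hx; rewrite divr_ge0 ?enorm_ge0 ?(ltW X0) //=.
by rewrite ler_pdivrMr // mul1r.
Qed.

Definition radial_pow (X : R) n k (x : 'I_n -> R) := (enorm n x / X) ^+ k.

Lemma radial_pow_norm_le1 (X : R) n k : 0 < X ->
  forall x : 'I_n -> R, inball n X x -> `|radial_pow X k x| <= 1.
Proof.
move=> X0 x hx; have /andP[r0 r1] := inball_div_unit X0 hx.
by rewrite ger0_norm ?exprn_ge0 ?exprn_ile1.
Qed.

Lemma radial_pow_lipschitz (X : R) n k : 0 < X ->
  forall x y : 'I_n -> R, inball n X x -> inball n X y ->
  `|radial_pow X k y - radial_pow X k x| <= k%:R / X * edist n y x.
Proof.
move=> X0 x y hx hy.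
have := normr_subXX_le k (inball_div_unit X0 hy) (inball_div_unit X0 hx).
move/le_trans; apply.
have Xinv0 : 0 <= X^-1 by rewrite invr_ge0 ltW.
rewrite -mulrBl normrM (ger0_norm Xinv0) mulrAC -mulrA.
by rewrite ler_wpM2l // ler_wpM2r // enorm_dist_le.
Qed.

Definition increment_dominated n (X : R) (f h : ('I_n -> R) -> R) (B K : R) :=
  (forall x, inball n X x -> `|h x| <= B * `|f x|) /\
  (forall x y, inball n X x -> inball n X y ->
     `|h y - h x| <= B * `|f y - f x| + K * edist n y x).

Lemma C0ball_dominated n X (f h : ('I_n -> R) -> R) (B K : R) : 0 <= B -> 0 <= K ->
  increment_dominated X f h B K -> C0ball n X f -> C0ball n X h.
Proof.
move=> B0 K0 [hbound hincr] [fcont [M fM]]; split; last first.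
  exists (B * M) => x hx; apply: le_trans (hbound x hx) _.
  by rewrite ler_wpM2l // fM.
move=> xi hxi e e0.
have e2B : 0 < e / 2 / (B + 1) by rewrite !divr_gt0 // ltr_wpDl.
have e2K : 0 < e / 2 / (K + 1) by rewrite !divr_gt0 // ltr_wpDl.
have [d d0 hd] := fcont xi hxi _ e2B.
exists (Num.min d (e / 2 / (K + 1))); first by rewrite lt_min d0.
move=> eta heta; rewrite lt_min => /andP[/(hd _ heta) hf hK].
apply: le_lt_trans (hincr _ _ hxi heta) _.
have hf' : (B + 1) * `|f eta - f xi| < e / 2.
  by rewrite mulrC -ltr_pdivlMr ?ltr_wpDl.
have hK' : (K + 1) * edist n eta xi < e / 2.
  by rewrite mulrC -ltr_pdivlMr ?ltr_wpDl.
have := normr_ge0 (f eta - f xi); have := edist_ge0 eta xi; nra.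
Qed.

Lemma C0aball_dominated alpha n X (f h : ('I_n -> R) -> R) (B K : R) :
  alpha <= 1 -> 0 <= B -> 0 <= K ->
  increment_dominated X f h B K -> C0aball alpha n X f -> C0aball alpha n X h.
Proof.
move=> a1 B0 K0 hdom [f0 [C fC]]; split; first exact: C0ball_dominated hdom f0.
exists (B * C + K) => x y hx hy /andP[d0 d1].
apply: le_trans (hdom.2 _ _ hx hy) _.
have dpow : edist n y x <= edist n y x `^ alpha by rewrite ger1_powR ?d0.
have := fC x y hx hy (introT andP (conj d0 d1)).
have := normr_ge0 (f y - f x); nra.
Qed.

Lemma mul_increment_dominated n (X : R) (g f : ('I_n -> R) -> R) (B L M : R) :
  (forall x, inball n X x -> `|g x| <= B) ->
  (forall x y, inball n X x -> inball n X y -> `|g y - g x| <= L * edist n y x) ->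
  (forall x, inball n X x -> `|f x| <= M) ->
  increment_dominated X f (fun x => g x * f x) B (L * M).
Proof.
move=> gB gL fM; split=> [x hx | x y hx hy].
  by rewrite normrM ler_wpM2r ?gB.
have -> : g y * f y - g x * f x = g y * (f y - f x) + (g y - g x) * f x by ring.
apply: le_trans (ler_normD _ _) _; rewrite !normrM mulrAC.
by rewrite lerD ?ler_wpM2r ?ler_pM ?gB ?gL ?fM.
Qed.

Lemma C0ball_mul n (X : R) (g f : ('I_n -> R) -> R) (B L : R) : 0 <= B -> 0 <= L ->
  (forall x, inball n X x -> `|g x| <= B) ->
  (forall x y, inball n X x -> inball n X y -> `|g y - g x| <= L * edist n y x) ->
  C0ball n X f -> C0ball n X (fun x => g x * f x).
Proof.
move=> B0 L0 gB gL f0; have [_ [M fM]] := f0.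
have fM' x : inball n X x -> `|f x| <= `|M| by move/fM/le_trans; apply; exact: ler_norm.
apply: C0ball_dominated (mul_increment_dominated gB gL fM') f0 => //.
exact: mulr_ge0.
Qed.

Lemma C0aball_mul alpha n (X : R) (g f : ('I_n -> R) -> R) (B L : R) :
  alpha <= 1 -> 0 <= B -> 0 <= L ->
  (forall x, inball n X x -> `|g x| <= B) ->
  (forall x y, inball n X x -> inball n X y -> `|g y - g x| <= L * edist n y x) ->
  C0aball alpha n X f -> C0aball alpha n X (fun x => g x * f x).
Proof.
move=> a1 B0 L0 gB gL f0; have [[_ [M fM]] _] := f0.
have fM' x : inball n X x -> `|f x| <= `|M| by move/fM/le_trans; apply; exact: ler_norm.
apply: C0aball_dominated (mul_increment_dominated gB gL fM') f0 => //.
exact: mulr_ge0.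
Qed.

Lemma C0ball_comp_isometry n m (X : R) (phi : ('I_n -> R) -> 'I_m -> R) F :
  (forall x, inball n X x -> inball m X (phi x)) ->
  (forall x y, edist m (phi x) (phi y) = edist n x y) ->
  C0ball m X F -> C0ball n X (fun x => F (phi x)).
Proof.
move=> phiX phid [Fcont [M FM]]; split; last by exists M => x /phiX /FM.
move=> xi hxi e e0; have [d d0 hd] := Fcont _ (phiX _ hxi) e e0.
by exists d => // eta heta; rewrite -phid; apply: hd; apply: phiX.
Qed.

Lemma C0aball_comp_isometry alpha n m (X : R) (phi : ('I_n -> R) -> 'I_m -> R) F :
  (forall x, inball n X x -> inball m X (phi x)) ->
  (forall x y, edist m (phi x) (phi y) = edist n x y) ->
  C0aball alpha m X F -> C0aball alpha n X (fun x => F (phi x)).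
Proof.
move=> phiX phid [F0 [C FC]]; split; first exact: C0ball_comp_isometry F0.
by exists C => x y hx hy; rewrite -phid; apply: FC; apply: phiX.
Qed.

Lemma coord_ord n (xi : 'I_n -> R) (i : 'I_n) : coord n xi i = xi i.
Proof. by rewrite /Defs.coord valK. Qed.

Lemma coord_lt n (xi : 'I_n -> R) k (k_lt : (k < n)%N) : coord n xi k = xi (Ordinal k_lt).
Proof. by rewrite -coord_ord. Qed.

Lemma coordB n (x y : 'I_n -> R) k :
  coord n (fun i => x i - y i) k = coord n x k - coord n y k.
Proof. by rewrite /Defs.coord; case: insub => //; rewrite subr0. Qed.

Lemma coordZ n (x : 'I_n -> R) c k : coord n (fun i => c * x i) k = c * coord n x k.
Proof. by rewrite /Defs.coord; case: insub => //; rewrite mulr0. Qed.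

Lemma enorm_split n (xi : 'I_n -> R) : (0 < n)%N ->
  enorm n xi = Num.sqrt (\sum_(k < n.-1) coord n xi k ^+ 2 + coord n xi n.-1 ^+ 2).
Proof.
case: n xi => // n xi _; rewrite /Defs.enorm big_ord_recr /=.
congr (Num.sqrt (_ + _)); last by rewrite -(coord_ord xi ord_max).
by apply: eq_bigr => i _; rewrite -(coord_ord xi (widen_ord _ i)).
Qed.

Definition embed n m (xi : 'I_n -> R) : 'I_m -> R := fun j =>
  if (j < n.-1)%N then coord n xi j else if j == m.-1 :> nat then coord n xi n.-1 else 0.
Arguments embed {n} m xi j.

Section Embedding.
Variables (n m : nat).
Hypotheses (n_gt0 : (0 < n)%N) (n_le_m : (n <= m)%N).

Let pred_le : (n.-1 <= m.-1)%N. Proof. by rewrite -!subn1 leq_sub2r. Qed.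

Lemma coord_embed_last (xi : 'I_n -> R) : coord m (embed m xi) m.-1 = coord n xi n.-1.
Proof.
have last_lt : (m.-1 < m)%N by rewrite ltn_predL (leq_trans n_gt0).
by rewrite (coord_lt _ last_lt) /embed /= ltnNge pred_le eqxx.
Qed.

Lemma sum_coord_embed (xi : 'I_n -> R) :
  \sum_(k < m.-1) coord m (embed m xi) k ^+ 2 = \sum_(k < n.-1) coord n xi k ^+ 2.
Proof.
have lt_m (k : 'I_m.-1) : (k < m)%N by rewrite (leq_trans (ltn_ord k)) ?leq_pred.
pose c k := if (k < n.-1)%N then coord n xi k else 0.
transitivity (\sum_(k < m.-1) c k ^+ 2).
  apply: eq_bigr => k _; rewrite (coord_lt _ (lt_m k)) /embed /c /=.
  by case: ifP => //; rewrite ltn_eqF.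
rewrite -(big_mkord xpredT (fun k => c k ^+ 2)) (big_cat_nat (leq0n _) pred_le) /=.
rewrite [X in _ + X]big_nat_cond [X in _ + X]big1 ?addr0; last first.
  by move=> k /andP[/andP[nk _] _]; rewrite /c ltnNge nk expr0n.
by rewrite big_mkord; apply: eq_bigr => k _; rewrite /c ltn_ord.
Qed.

Lemma enorm_embed (xi : 'I_n -> R) : enorm m (embed m xi) = enorm n xi.
Proof.
by rewrite !enorm_split ?(leq_trans n_gt0) // sum_coord_embed coord_embed_last.
Qed.

Lemma flat_embed a Q (xi : 'I_n -> R) : flat a m Q (embed m xi) = flat a n Q xi.
Proof. by rewrite /Defs.flat sum_coord_embed coord_embed_last. Qed.

Lemma edist_embed (x y : 'I_n -> R) : edist m (embed m x) (embed m y) = edist n x y.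
Proof.
rewrite /Defs.edist -enorm_embed; congr (enorm m _); apply: funext => j.
by rewrite /embed !coordB; do 2 case: ifP => // _; rewrite subr0.
Qed.

Lemma kpt_embed Xi0 (x : 'I_n -> R) : embed m (kpt Xi0 n x) = kpt Xi0 m (embed m x).
Proof.
rewrite /Defs.kpt enorm_embed; apply: funext => j.
by rewrite /embed !coordZ; do 2 case: ifP => // _; rewrite mulr0.
Qed.

Lemma inball_embed X (xi : 'I_n -> R) : inball n X xi -> inball m X (embed m xi).
Proof. by rewrite /Defs.inball enorm_embed. Qed.

End Embedding.

Lemma radial_pow_kpt (X : R) n k (xi : 'I_n -> R) : 0 < X -> 0 < enorm n xi ->
  radial_pow X k (kpt X n xi) = (enorm n xi / X)^-1 ^+ k.
Proof.
move=> X0 xi0; rewrite /radial_pow /Defs.kpt enormZ ger0_norm ?sqr_ge0 //.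
by congr (_ ^+ k); field; rewrite ?gt_eqF.
Qed.

Section Transfer.
Variables (reg : Defs.regularity R) (a Xi0 : R) (n m : nat).
Hypotheses (Xi0_gt0 : 0 < Xi0) (n_ge2 : (2 <= n)%N) (n_le_m : (n <= m)%N).
Hypothesis reg_embed : forall X (F : ('I_m -> R) -> R),
  reg X F -> reg X (fun xi : 'I_n -> R => F (embed m xi)).
Hypothesis reg_radial_mul : forall F : ('I_n -> R) -> R,
  reg Xi0 F -> reg Xi0 (fun xi => radial_pow Xi0 (m - n) xi * F xi).

Let n_gt0 : (0 < n)%N. Proof. exact: ltnW. Qed.

Lemma Cint_restrict Rr Q : Cint reg a m Rr Q -> Cint reg a n Rr Q.
Proof.
move=> [Qeven [Qcont Qreg]]; do 2 split => //.
have -> : flat a n Q = (fun xi => flat a m Q (embed m xi)).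
  by apply: funext => xi; rewrite flat_embed.
exact: reg_embed.
Qed.

Lemma Cext_restrict Q : Cext reg a Xi0 m Q -> Cext reg a Xi0 n Q.
Proof.
move=> [Qeven [F [Freg FK]]]; split => //.
exists (fun xi => radial_pow Xi0 (m - n) xi * F (embed m xi)); split.
  exact/reg_radial_mul/reg_embed.
move=> xi xi_ge; have xi0 : 0 < enorm n xi := lt_le_trans Xi0_gt0 xi_ge.
rewrite radial_pow_kpt // kpt_embed // FK ?enorm_embed // flat_embed //.
(* With [r = |xi| / Xi0] the weights combine as [r^-(m-n) * r^(m-2) = r^(n-2)]. *)
set r := enorm n xi / Xi0; have r0 : r != 0 by rewrite mulf_neq0 ?invr_eq0 ?gt_eqF.
have -> : (m - 2 = (m - n) + (n - 2))%N by lia.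
by rewrite exprD !mulrA -exprMn mulVf // expr1n mul1r.
Qed.

Lemma Cfull_restrict chi Q : Cfull reg a Xi0 chi m Q -> Cfull reg a Xi0 chi n Q.
Proof.
move=> [Qeven [Qint Qext]]; split => //.
by split; [exact: Cint_restrict | exact: Cext_restrict].
Qed.

End Transfer.

Lemma C0_restrict a Xi0 chi n m Q : 0 < Xi0 -> (2 <= n)%N -> (n <= m)%N ->
  C0 R a Xi0 chi m Q -> C0 R a Xi0 chi n Q.
Proof.
move=> Xi0_gt0 n_ge2 n_le_m; have n_gt0 := ltnW n_ge2.
apply: Cfull_restrict => // [X F|F].
  by apply: C0ball_comp_isometry; [exact: inball_embed | exact: edist_embed].
apply: C0ball_mul (radial_pow_norm_le1 _ Xi0_gt0) (radial_pow_lipschitz _ Xi0_gt0) => //.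
by rewrite divr_ge0 // ltW.
Qed.

Lemma C0a_restrict alpha a Xi0 chi n m Q : alpha <= 1 -> 0 < Xi0 ->
  (2 <= n)%N -> (n <= m)%N -> C0a R alpha a Xi0 chi m Q -> C0a R alpha a Xi0 chi n Q.
Proof.
move=> alpha_le1 Xi0_gt0 n_ge2 n_le_m; have n_gt0 := ltnW n_ge2.
apply: Cfull_restrict => // [X F|F].
  by apply: C0aball_comp_isometry; [exact: inball_embed | exact: edist_embed].
apply: C0aball_mul (radial_pow_norm_le1 _ Xi0_gt0) (radial_pow_lipschitz _ Xi0_gt0) => //.
by rewrite divr_ge0 // ltW.
Qed.

End Restriction.

Theorem proposition9 (R : realType) (a Xi0 alpha : R) (chi : R -> R)
    (m n : nat) (Q : R -> R -> R) :
  0 < a -> 0 < Xi0 -> 0 < alpha < 1 -> @is_cutoff R chi ->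
  (3 <= n)%N -> (n <= m)%N ->
  (@C0 R a Xi0 chi m Q -> @C0 R a Xi0 chi n Q) /\
  (@C0a R alpha a Xi0 chi m Q -> @C0a R alpha a Xi0 chi n Q).
Proof.
move=> _ Xi0_gt0 /andP[_ /ltW alpha_le1] _ /ltnW n_ge2 n_le_m.
by split; [exact: C0_restrict | exact: C0a_restrict].
Qed.
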